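(* Let $(\mathscr{A},\mathscr{E})$ and $(\mathscr{B},\mathscr{F})$ be exact categories (in the sense of Quillen) and let $L : \mathscr{A} \rightarrow \mathscr{B}$ be an exact functor. Suppose $\mathscr{F}' \subseteq \mathscr{F}$ is a subfamily of conflations such that $(\mathscr{B},\mathscr{F}')$ is again an exact category. Define $\mathscr{E}' = \{ s \in \mathscr{E} : Ls \in \mathscr{F}' \}$. Then $(\mathscr{A},\mathscr{E}')$ is an exact category.
   Context: An exact category $(\mathscr{A},\mathscr{E})$ is an additive category $\mathscr{A}$ together with a class $\mathscr{E}$ of kernel–cokernel pairs (short exact sequences, ''conflations'') $X \rightarrowtail Y \twoheadrightarrow Z$, closed under isomorphism, satisfying Quillen's axioms (equivalently Keller's minimal axioms: identity of $0$ is a deflation; composites of deflations are deflations; pullbacks of deflations along arbitrary morphisms exist and are deflations; dually pushouts of inflations exist and are inflations). An exact functor $L:(\mathscr{A},\mathscr{E})\to(\mathscr{B},\mathscr{F})$ is an additive functor sending sequences in $\mathscr{E}$ to sequences in $\mathscr{F}$. For $s\in\mathscr{E}$, $Ls$ denotes the image sequence. *)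

From HB Require Import structures.
From mathcomp Require Import all_boot all_algebra.
Set Implicit Arguments. Unset Strict Implicit. Unset Printing Implicit Defensive.
Import GRing.Theory.
Local Open Scope ring_scope.

(* Preadditive category; composition is written in diagrammatic order:
   comp f g = "first f, then g" = g o f. *)
Record PreAddCat := {
  Ob :> Type;
  Mor : Ob -> Ob -> zmodType;
  idm : forall X, Mor X X;
  comp : forall X Y Z, Mor X Y -> Mor Y Z -> Mor X Z;
  compA : forall X Y Z W (f : Mor X Y) (g : Mor Y Z) (h : Mor Z W),
      comp (comp f g) h = comp f (comp g h);
  comp1m : forall X Y (f : Mor X Y), comp (idm X) f = f;
  compm1 : forall X Y (f : Mor X Y), comp f (idm Y) = f;
  compDl : forall X Y Z (f f' : Mor X Y) (g : Mor Y Z),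
      comp (f + f') g = comp f g + comp f' g;
  compDr : forall X Y Z (f : Mor X Y) (g g' : Mor Y Z),
      comp f (g + g') = comp f g + comp f g'
}.
Arguments Mor {p} _ _.
Arguments idm {p}.
Arguments comp {p X Y Z}.

Notation "f ';;' g" := (comp f g) (at level 40, left associativity).

Section Defs.
Variable C : PreAddCat.

Definition is_zero_object (Z : C) : Prop :=
  (forall X (f : Mor Z X), f = 0) /\ (forall X (f : Mor X Z), f = 0).

Definition is_biproduct (X Y S : C) (i1 : Mor X S) (i2 : Mor Y S)
    (p1 : Mor S X) (p2 : Mor S Y) : Prop :=
  [/\ i1 ;; p1 = idm X, i2 ;; p2 = idm Y, i1 ;; p2 = 0, i2 ;; p1 = 0
    & p1 ;; i1 + p2 ;; i2 = idm S].

Definition is_additive : Prop :=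
  (exists Z : C, is_zero_object Z) /\
  (forall X Y : C, exists S (i1 : Mor X S) (i2 : Mor Y S) (p1 : Mor S X)
     (p2 : Mor S Y), is_biproduct i1 i2 p1 p2).

Definition is_iso (X Y : C) (f : Mor X Y) : Prop :=
  exists g : Mor Y X, f ;; g = idm X /\ g ;; f = idm Y.

Definition is_kernel (X Y Z : C) (f : Mor X Y) (g : Mor Y Z) : Prop :=
  f ;; g = 0 /\
  forall W (h : Mor W Y), h ;; g = 0 -> exists! u : Mor W X, u ;; f = h.

Definition is_cokernel (X Y Z : C) (f : Mor X Y) (g : Mor Y Z) : Prop :=
  f ;; g = 0 /\
  forall W (h : Mor Y W), f ;; h = 0 -> exists! u : Mor Z W, g ;; u = h.

Definition is_pullback (P Y Z' Z : C) (a : Mor P Y) (b : Mor P Z')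
    (g : Mor Y Z) (h : Mor Z' Z) : Prop :=
  a ;; g = b ;; h /\
  forall W (u : Mor W Y) (v : Mor W Z'), u ;; g = v ;; h ->
    exists! w : Mor W P, w ;; a = u /\ w ;; b = v.

Definition is_pushout (X Y X' P : C) (f : Mor X Y) (h : Mor X X')
    (a : Mor X' P) (b : Mor Y P) : Prop :=
  f ;; b = h ;; a /\
  forall W (u : Mor Y W) (v : Mor X' W), f ;; u = h ;; v ->
    exists! w : Mor P W, b ;; w = u /\ a ;; w = v.

Definition SeqClass := forall X Y Z : C, Mor X Y -> Mor Y Z -> Prop.

Definition deflation (E : SeqClass) (Y Z : C) (g : Mor Y Z) : Prop :=
  exists X (f : Mor X Y), E X Y Z f g.

Definition inflation (E : SeqClass) (X Y : C) (f : Mor X Y) : Prop :=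
  exists Z (g : Mor Y Z), E X Y Z f g.

Definition is_exact_structure (E : SeqClass) : Prop :=
  [/\
      forall X Y Z (f : Mor X Y) (g : Mor Y Z),
        E X Y Z f g -> is_kernel f g /\ is_cokernel f g,
      forall X Y Z (f : Mor X Y) (g : Mor Y Z) X' Y' Z' (f' : Mor X' Y')
        (g' : Mor Y' Z') (u : Mor X X') (v : Mor Y Y') (w : Mor Z Z'),
        is_iso u -> is_iso v -> is_iso w ->
        f ;; v = u ;; f' -> g ;; w = v ;; g' ->
        E X Y Z f g -> E X' Y' Z' f' g',
      (forall Z : C, is_zero_object Z -> deflation E (idm Z)) /\
      (forall Z : C, is_zero_object Z -> inflation E (idm Z)),
      (forall X Y Z (f : Mor X Y) (g : Mor Y Z),
         deflation E f -> deflation E g -> deflation E (f ;; g)) /\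
      (forall X Y Z (f : Mor X Y) (g : Mor Y Z),
         inflation E f -> inflation E g -> inflation E (f ;; g))
    &
      (forall X Y X' (f : Mor X Y) (h : Mor X X'), inflation E f ->
         exists P (a : Mor X' P) (b : Mor Y P),
           is_pushout f h a b /\ inflation E a) /\
      (forall Y Z Z' (g : Mor Y Z) (h : Mor Z' Z), deflation E g ->
         exists P (a : Mor P Y) (b : Mor P Z'),
           is_pullback a b g h /\ deflation E b)].

End Defs.

Definition is_exact_category (C : PreAddCat) (E : SeqClass C) : Prop :=
  is_additive C /\ is_exact_structure E.

Record AddFunctor (A B : PreAddCat) := {
  Fob :> A -> B;
  Fmap : forall X Y : A, Mor X Y -> Mor (Fob X) (Fob Y);
  Fmap_id : forall X, Fmap (idm X) = idm (Fob X);
  Fmap_comp : forall X Y Z (f : Mor X Y) (g : Mor Y Z),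
      Fmap (f ;; g) = Fmap f ;; Fmap g;
  Fmap_add : forall X Y (f f' : Mor X Y), Fmap (f + f') = Fmap f + Fmap f'
}.
Arguments Fmap {A B} a {X Y}.

Definition is_exact_functor (A B : PreAddCat) (E : SeqClass A) (F : SeqClass B)
    (L : AddFunctor A B) : Prop :=
  forall X Y Z (f : Mor X Y) (g : Mor Y Z),
    E X Y Z f g -> F (L X) (L Y) (L Z) (Fmap L f) (Fmap L g).

Definition preimage_class (A B : PreAddCat) (E : SeqClass A) (F' : SeqClass B)
    (L : AddFunctor A B) : SeqClass A :=
  fun X Y Z f g => E X Y Z f g /\ F' (L X) (L Y) (L Z) (Fmap L f) (Fmap L g).

From Pilot Require Import Defs.
From mathcomp Require Import all_boot all_algebra.
Set Implicit Arguments. Unset Strict Implicit. Unset Printing Implicit Defensive.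
Import GRing.Theory.
Local Open Scope ring_scope.
Set Bullet Behavior "Strict Subproofs".

(* In an exact category a kernel of a deflation is itself a conflation, so the
   axioms on deflations (identities of zero objects, composites) and closure
   under isomorphism pass from (E, F') to E' directly.  The real point is the
   pushout axiom: the pushout square of an inflation f along h is encoded by
   the conflation X >-> Y (+) X' ->> P (Buehler, Prop. 2.12), which the exact
   functor L sends to an F-conflation, i.e. to a cokernel diagram; hence L
   preserves the square, and the pushout of the F'-inflation L f is again an
   F'-inflation.  The dual axioms follow by passing to opposite categories. *)

Section PreAdditive.
Variable C : PreAddCat.

Lemma comp0m (X Y Z : C) (g : Mor Y Z) : (0 : Mor X Y) ;; g = 0.
Proof.
have H := compDl (0 : Mor X Y) 0 g; rewrite addr0 in H.
by apply: (addrI ((0 : Mor X Y) ;; g)); rewrite -H addr0.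
Qed.

Lemma compm0 (X Y Z : C) (f : Mor X Y) : f ;; (0 : Mor Y Z) = 0.
Proof.
have H := compDr f (0 : Mor Y Z) 0; rewrite addr0 in H.
by apply: (addrI (f ;; (0 : Mor Y Z))); rewrite -H addr0.
Qed.

Lemma compNm (X Y Z : C) (f : Mor X Y) (g : Mor Y Z) : (- f) ;; g = - (f ;; g).
Proof. by apply: (addrI (f ;; g)); rewrite -compDl !addrN comp0m. Qed.

Lemma ex1_eq (T : Type) (P : T -> Prop) (x y : T) :
  (exists! z, P z) -> P x -> P y -> x = y.
Proof. by case=> z [_ Uz] Px Py; rewrite -(Uz x Px) (Uz y Py). Qed.

Lemma iso_idm (X : C) : is_iso (idm X).
Proof. by exists (idm X); rewrite comp1m. Qed.

Lemma idm0_zero_object (Z : C) : idm Z = 0 -> is_zero_object Z.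
Proof.
move=> id0; split=> X f; first by rewrite -[f]comp1m id0 comp0m.
by rewrite -[f]compm1 id0 compm0.
Qed.

Lemma kernel_unique_iso (K1 K2 Y Z : C) (k1 : Mor K1 Y) (k2 : Mor K2 Y)
    (g : Mor Y Z) :
  is_kernel k1 g -> is_kernel k2 g ->
  exists u : Mor K2 K1, is_iso u /\ u ;; k1 = k2.
Proof.
case=> e1 H1 [e2 H2].
have [u [Hu _]] := H1 _ k2 e2; have [v [Hv _]] := H2 _ k1 e1.
exists u; split=> //; exists v; split.
- by apply: (ex1_eq (H2 _ k2 e2)); rewrite ?comp1m // Defs.compA Hv.
- by apply: (ex1_eq (H1 _ k1 e1)); rewrite ?comp1m // Defs.compA Hu.
Qed.

Lemma cokernel_unique_iso (X Y Z1 Z2 : C) (f : Mor X Y) (c1 : Mor Y Z1)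
    (c2 : Mor Y Z2) :
  is_cokernel f c1 -> is_cokernel f c2 ->
  exists w : Mor Z1 Z2, is_iso w /\ c1 ;; w = c2.
Proof.
case=> e1 H1 [e2 H2].
have [u [Hu _]] := H1 _ c2 e2; have [v [Hv _]] := H2 _ c1 e1.
exists u; split=> //; exists v; split.
- by apply: (ex1_eq (H1 _ c1 e1)); rewrite ?compm1 // -Defs.compA Hu.
- by apply: (ex1_eq (H2 _ c2 e2)); rewrite ?compm1 // -Defs.compA Hv.
Qed.

Lemma pushout_unique_iso (X Y X' P P' : C) (f : Mor X Y) (h : Mor X X')
    (a : Mor X' P) (b : Mor Y P) (a' : Mor X' P') (b' : Mor Y P') :
  is_pushout f h a b -> is_pushout f h a' b' ->
  exists phi : Mor P P', [/\ is_iso phi, a ;; phi = a' & b ;; phi = b'].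
Proof.
case=> e1 H1 [e2 H2].
have [u [[Hub Hua] _]] := H1 _ b' a' e2; have [v [[Hvb Hva] _]] := H2 _ b a e1.
exists u; split=> //; exists v; split.
- by apply: (ex1_eq (H1 _ b a e1)); rewrite ?compm1 // -!Defs.compA Hub Hua.
- by apply: (ex1_eq (H2 _ b' a' e2)); rewrite ?compm1 // -!Defs.compA Hvb Hva.
Qed.

Section Biproduct.
Variables (Y X' S : C) (i1 : Mor Y S) (i2 : Mor X' S) (p1 : Mor S Y) (p2 : Mor S X').
Hypothesis biprodS : is_biproduct i1 i2 p1 p2.

Lemma biprod_i2p1 W (x : Mor W X') : x ;; i2 ;; p1 = 0.
Proof. by case: biprodS => _ _ _ e _; rewrite Defs.compA e compm0. Qed.

Lemma biprod_i2p2 W (x : Mor W X') : x ;; i2 ;; p2 = x.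
Proof. by case: biprodS => _ e _ _ _; rewrite Defs.compA e compm1. Qed.

Lemma biprod_idm : p1 ;; i1 + p2 ;; i2 = idm S.
Proof. by case: biprodS. Qed.

Lemma biprod_ext W (w w' : Mor S W) :
  i1 ;; w = i1 ;; w' -> i2 ;; w = i2 ;; w' -> w = w'.
Proof.
move=> e1 e2; rewrite -(comp1m w) -(comp1m w') -biprod_idm !compDl.
by rewrite !Defs.compA e1 e2.
Qed.

Lemma i1_copair W (x : Mor Y W) (y : Mor X' W) : i1 ;; (p1 ;; x + p2 ;; y) = x.
Proof.
case: biprodS => e11 _ e12 _ _.
by rewrite compDr -!Defs.compA e11 e12 comp1m comp0m addr0.
Qed.

Lemma i2_copair W (x : Mor Y W) (y : Mor X' W) : i2 ;; (p1 ;; x + p2 ;; y) = y.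
Proof.
case: biprodS => _ e22 _ e21 _.
by rewrite compDr -!Defs.compA e22 e21 comp1m comp0m add0r.
Qed.

Lemma pushout_cokernel X P (f : Mor X Y) (h : Mor X X') (a : Mor X' P)
    (b : Mor Y P) :
  is_pushout f h a b -> is_cokernel (f ;; i1 - h ;; i2) (p1 ;; b + p2 ;; a).
Proof.
case=> sq H; split.
  by rewrite compDl compNm !Defs.compA !i1_copair !i2_copair sq addrN.
move=> W t Ht.
have sqt : f ;; (i1 ;; t) = h ;; (i2 ;; t).
  by apply/eqP; rewrite -subr_eq0 -!Defs.compA -compNm -compDl Ht.
have [w [[wb wa] Uw]] := H W _ _ sqt.
exists w; split.
  by rewrite compDl !Defs.compA wb wa -!Defs.compA -compDl biprod_idm comp1m.
by move=> w' Hw'; apply: Uw; split; rewrite -Hw' -Defs.compA ?i1_copair ?i2_copair.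
Qed.

Lemma cokernel_pushout X P (f : Mor X Y) (h : Mor X X') (a : Mor X' P)
    (b : Mor Y P) :
  f ;; b = h ;; a -> is_cokernel (f ;; i1 - h ;; i2) (p1 ;; b + p2 ;; a) ->
  is_pushout f h a b.
Proof.
move=> sq [_ H]; split=> // W u v e.
have [|w [Hw Uw]] := H W (p1 ;; u + p2 ;; v).
  by rewrite compDl compNm !Defs.compA !i1_copair !i2_copair e addrN.
exists w; split.
  split; first by rewrite -(i1_copair b a) Defs.compA Hw i1_copair.
  by rewrite -(i2_copair b a) Defs.compA Hw i2_copair.
by move=> w' [e1 e2]; apply: Uw; rewrite compDl !Defs.compA e1 e2.
Qed.

End Biproduct.

Section BiproductPushouts.
Variables (X X' T : C) (j1 : Mor X T) (j2 : Mor X' T) (q1 : Mor T X) (q2 : Mor T X').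
Hypothesis biprodT : is_biproduct j1 j2 q1 q2.

Lemma pushout_from_zero (K : C) (k : Mor K X') (h : Mor X X') :
  is_zero_object K -> is_pushout k (0 : Mor K X) (j1 - h ;; j2) j2.
Proof.
move=> zK; split; first by rewrite (zK.1 _ (k ;; j2)) (zK.1 _ (0 ;; _)).
move=> W u v _; exists (q1 ;; (v + h ;; u) + q2 ;; u); split.
  split; first by rewrite (i2_copair biprodT).
  by rewrite compDl compNm !Defs.compA (i1_copair biprodT) (i2_copair biprodT) addrK.
move=> w' [e1 e2]; apply: (biprod_ext biprodT); last by rewrite (i2_copair biprodT) e1.
rewrite (i1_copair biprodT) -e2 compDl compNm Defs.compA e1.
by rewrite subrK.
Qed.

Lemma pushout_biprod_map (Y S : C) (i1 : Mor Y S) (i2 : Mor X' S) (p1 : Mor S Y)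
    (p2 : Mor S X') (f : Mor X Y) :
  is_biproduct i1 i2 p1 p2 -> is_pushout f j1 (q1 ;; f ;; i1 + q2 ;; i2) i1.
Proof.
move=> biprodS; have [ej11 ej22 ej12 ej21 _] := biprodT; split.
  by rewrite compDr -!Defs.compA ej11 ej12 comp1m comp0m addr0.
move=> W u v e; exists (p1 ;; u + p2 ;; (j2 ;; v)); split.
  split; first by rewrite (i1_copair biprodS).
  rewrite compDl !Defs.compA (i1_copair biprodS) (i2_copair biprodS) e.
  by rewrite -!Defs.compA -compDl (biprod_idm biprodT) comp1m.
move=> w' [e1 e2]; apply: (biprod_ext biprodS); first by rewrite (i1_copair biprodS) e1.
rewrite (i2_copair biprodS) -e2 -Defs.compA compDr -!Defs.compA ej21 ej22.
by rewrite comp1m !comp0m add0r.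
Qed.

End BiproductPushouts.

End PreAdditive.

Definition iso_closed (C : PreAddCat) (E : SeqClass C) : Prop :=
  forall X Y Z (f : Mor X Y) (g : Mor Y Z) X' Y' Z' (f' : Mor X' Y')
    (g' : Mor Y' Z') (u : Mor X X') (v : Mor Y Y') (w : Mor Z Z'),
  is_iso u -> is_iso v -> is_iso w ->
  f ;; v = u ;; f' -> g ;; w = v ;; g' ->
  E X Y Z f g -> E X' Y' Z' f' g'.

Section ExactStructure.
Variables (C : PreAddCat) (E : SeqClass C).
Arguments E : clear implicits.
Hypothesis exactE : is_exact_structure E.

Lemma conflation_of_kernel (X Y Z : C) (f : Mor X Y) (g : Mor Y Z) :
  is_kernel f g -> deflation E g -> E X Y Z f g.
Proof.
move=> kerf [K [k Ek]]; have [kcE isoE _ _ _] := exactE.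
have [u [iso_u uf]] := kernel_unique_iso kerf (kcE _ _ _ _ _ Ek).1.
apply: (isoE _ _ _ _ _ _ _ _ _ _ u (idm Y) (idm Z) iso_u (iso_idm _) (iso_idm _)
  _ _ Ek).
  by rewrite compm1.
by rewrite compm1 comp1m.
Qed.

Lemma conflation_of_cokernel (X Y Z : C) (f : Mor X Y) (g : Mor Y Z) :
  is_cokernel f g -> inflation E f -> E X Y Z f g.
Proof.
move=> cokerg [Q [c Ec]]; have [kcE isoE _ _ _] := exactE.
have [w [iso_w cw]] := cokernel_unique_iso (kcE _ _ _ _ _ Ec).2 cokerg.
apply: (isoE _ _ _ _ _ _ _ _ _ _ (idm X) (idm Y) w (iso_idm _) (iso_idm _) iso_w
  _ _ Ec).
  by rewrite compm1 comp1m.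
by rewrite comp1m.
Qed.

Lemma inflation_comp_iso (X Y Y' : C) (f : Mor X Y) (phi : Mor Y Y') :
  inflation E f -> is_iso phi -> inflation E (f ;; phi).
Proof.
move=> [Q [c Ec]] [psi [phipsi psiphi]]; have [_ isoE _ _ _] := exactE.
exists Q, (psi ;; c).
apply: (isoE _ _ _ _ _ _ _ _ _ _ (idm X) phi (idm Q) (iso_idm _) _ (iso_idm _) _ _ Ec).
- by exists psi.
- by rewrite comp1m.
- by rewrite compm1 -Defs.compA phipsi comp1m.
Qed.

Lemma pushout_inflation (X Y X' P : C) (f : Mor X Y) (h : Mor X X')
    (a : Mor X' P) (b : Mor Y P) :
  inflation E f -> is_pushout f h a b -> inflation E a.
Proof.
move=> If po; have [_ _ _ _ [pushoutE _]] := exactE.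
have [P0 [a0 [b0 [po0 Ia0]]]] := pushoutE _ _ _ f h If.
have [phi [iso_phi <- _]] := pushout_unique_iso po0 po.
exact: inflation_comp_iso.
Qed.

(* The pullback of the deflation idm Z along 0 : B -> Z is an isomorphism
   P -> B, so its kernel is zero and is moved onto B by that isomorphism. *)
Lemma zero_inflation (Z : C) : is_zero_object Z ->
  forall B : C, exists K (k : Mor K B), is_zero_object K /\ inflation E k.
Proof.
move=> zZ B; have [kcE _ [defl_idm _] _ [_ pullbackE]] := exactE.
have [P [a [b [[sq Hpb] [K [k Ek]]]]]] :=
  pullbackE _ _ _ (idm Z) (0 : Mor B Z) (defl_idm Z zZ).
have [|w [[_ wb] _]] := Hpb B 0 (idm B); first by rewrite compm1 comp1m.
have bw : b ;; w = idm P.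
  apply: (ex1_eq (Hpb P a b sq)); rewrite ?comp1m //; split.
    by rewrite (zZ.2 _ a) compm0.
  by rewrite Defs.compA wb compm1.
have [[kb0 kerk] _] := kcE _ _ _ _ _ Ek.
have k0 : k = 0 by rewrite -[k]compm1 -bw -Defs.compA kb0 comp0m.
have zK : is_zero_object K.
  apply: idm0_zero_object; apply: (ex1_eq (kerk K k kb0)).
    by rewrite comp1m.
  by rewrite comp0m k0.
exists K, (k ;; b); split=> //.
by apply: inflation_comp_iso; [exists B, b | exists w].
Qed.

(* Buehler, Prop. 2.12: [1, -h] : X >-> X (+) X' is an inflation (a pushout of
   0 >-> X'), and so is f (+) 1 (a pushout of f); their composite is
   [f, -h] : X -> Y (+) X', whose cokernel is [b, a]. *)
Lemma pushout_conflation (X Y X' P S : C) (f : Mor X Y) (h : Mor X X')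
    (a : Mor X' P) (b : Mor Y P) (i1 : Mor Y S) (i2 : Mor X' S)
    (p1 : Mor S Y) (p2 : Mor S X') :
  is_additive C -> is_biproduct i1 i2 p1 p2 -> inflation E f ->
  is_pushout f h a b -> E X S P (f ;; i1 - h ;; i2) (p1 ;; b + p2 ;; a).
Proof.
move=> [[Z zZ] biprods] biprodS If po.
have [_ _ _ [_ inflation_comp] _] := exactE.
have [K [k [zK Ik]]] := zero_inflation zZ X'.
have [T [j1 [j2 [q1 [q2 biprodT]]]]] := biprods X X'.
have Igraph : inflation E (j1 - h ;; j2).
  exact: pushout_inflation Ik (pushout_from_zero biprodT k h zK).
have Isum : inflation E (q1 ;; f ;; i1 + q2 ;; i2).
  exact: pushout_inflation If (pushout_biprod_map biprodT f biprodS).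
have graph_sum : (j1 - h ;; j2) ;; (q1 ;; f ;; i1 + q2 ;; i2) = f ;; i1 - h ;; i2.
  have [ej11 _ ej12 _ _] := biprodT.
  rewrite compDl compNm !compDr -!Defs.compA ej11 ej12.
  by rewrite (biprod_i2p1 biprodT) (biprod_i2p2 biprodT) comp1m !comp0m addr0 add0r.
apply: conflation_of_cokernel (pushout_cokernel biprodS po) _.
by rewrite -graph_sum; apply: inflation_comp.
Qed.

End ExactStructure.

Section AdditiveFunctor.
Variables (A B : PreAddCat) (L : AddFunctor A B).

Lemma Fmap0 (X Y : A) : Fmap L (0 : Mor X Y) = 0.
Proof.
have H := Fmap_add L (0 : Mor X Y) 0; rewrite addr0 in H.
by apply: (addrI (Fmap L (0 : Mor X Y))); rewrite -H addr0.
Qed.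

Lemma FmapB (X Y : A) (f g : Mor X Y) : Fmap L (f - g) = Fmap L f - Fmap L g.
Proof.
rewrite Fmap_add; congr (_ + _); apply: (addrI (Fmap L g)).
by rewrite -Fmap_add !addrN Fmap0.
Qed.

Lemma Fmap_iso (X Y : A) (u : Mor X Y) : is_iso u -> is_iso (Fmap L u).
Proof.
by case=> v [uv vu]; exists (Fmap L v); rewrite -!Fmap_comp uv vu !Fmap_id.
Qed.

Lemma Fmap_zero_object (Z : A) : is_zero_object Z -> is_zero_object (L Z).
Proof.
by move=> zZ; apply: idm0_zero_object; rewrite -Fmap_id (zZ.1 _ (idm Z)) Fmap0.
Qed.

Lemma Fmap_biproduct (Y X' S : A) (i1 : Mor Y S) (i2 : Mor X' S) (p1 : Mor S Y)
    (p2 : Mor S X') :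
  is_biproduct i1 i2 p1 p2 ->
  is_biproduct (Fmap L i1) (Fmap L i2) (Fmap L p1) (Fmap L p2).
Proof.
case=> e11 e22 e12 e21 e; split;
  rewrite -?Fmap_comp ?e11 ?e22 ?e12 ?e21 ?Fmap_id ?Fmap0 //.
by rewrite -Fmap_add e Fmap_id.
Qed.

End AdditiveFunctor.

Section PreimageClass.
Variables (A B : PreAddCat) (E : SeqClass A) (F F' : SeqClass B) (L : AddFunctor A B).
Arguments E : clear implicits.
Hypotheses (exactE : is_exact_category E) (exactF : is_exact_structure F)
  (exactL : is_exact_functor E F L) (exactF' : is_exact_structure F').

Local Notation E' := (preimage_class E F' L).

Lemma exact_functor_kernel_cokernel (X Y Z : A) (f : Mor X Y) (g : Mor Y Z) :
  E X Y Z f g ->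
  is_kernel (Fmap L f) (Fmap L g) /\ is_cokernel (Fmap L f) (Fmap L g).
Proof. by case: exactF => kcF _ _ _ _ /exactL /kcF. Qed.

Lemma exact_functor_pushout (X Y X' P : A) (f : Mor X Y) (h : Mor X X')
    (a : Mor X' P) (b : Mor Y P) :
  inflation E f -> is_pushout f h a b ->
  is_pushout (Fmap L f) (Fmap L h) (Fmap L a) (Fmap L b).
Proof.
move=> If po; have [[_ biprods] exactEs] := exactE.
have [S [i1 [i2 [p1 [p2 biprodS]]]]] := biprods Y X'.
have := pushout_conflation exactEs exactE.1 biprodS If po.
move/exact_functor_kernel_cokernel.
rewrite FmapB !Fmap_add !Fmap_comp => -[_ cokerL].
apply: (cokernel_pushout (Fmap_biproduct L biprodS) _ cokerL).
by rewrite -!Fmap_comp po.1.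
Qed.

Lemma preimage_iso_closed : iso_closed E'.
Proof.
have [_ [_ isoE _ _ _]] := exactE; have [_ isoF' _ _ _] := exactF'.
move=> X Y Z f g X' Y' Z' f' g' u v w iso_u iso_v iso_w ef eg [Ef F'f]; split.
  exact: (isoE _ _ _ _ _ _ _ _ _ _ u v w iso_u iso_v iso_w ef eg Ef).
apply: (isoF' _ _ _ _ _ _ _ _ _ _ (Fmap L u) (Fmap L v) (Fmap L w) _ _ _ _ _ F'f);
  rewrite -?Fmap_comp ?ef ?eg //; exact: Fmap_iso.
Qed.

Lemma preimage_deflation_idm (Z : A) : is_zero_object Z -> deflation E' (idm Z).
Proof.
move=> zZ; have [_ [_ _ [defl_idmE _] _ _]] := exactE.
have [_ _ [defl_idmF' _] _ _] := exactF'.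
have [X [f Ef]] := defl_idmE Z zZ; exists X, f; split=> //.
apply: (conflation_of_kernel exactF' (exact_functor_kernel_cokernel Ef).1).
by rewrite Fmap_id; apply/defl_idmF'/Fmap_zero_object.
Qed.

Lemma preimage_deflation_comp (X Y Z : A) (f : Mor X Y) (g : Mor Y Z) :
  deflation E' f -> deflation E' g -> deflation E' (f ;; g).
Proof.
move=> [K1 [k1 [Ek1 F'k1]]] [K2 [k2 [Ek2 F'k2]]].
have [_ [_ _ _ [defl_compE _] _]] := exactE.
have [_ _ _ [defl_compF' _] _] := exactF'.
have [K [k Ek]] : deflation E (f ;; g).
  by apply: defl_compE; [exists K1, k1 | exists K2, k2].
exists K, k; split=> //.
apply: (conflation_of_kernel exactF' (exact_functor_kernel_cokernel Ek).1).
rewrite Fmap_comp; apply: defl_compF'.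
  by exists (L K1), (Fmap L k1).
by exists (L K2), (Fmap L k2).
Qed.

Lemma preimage_pushout (X Y X' : A) (f : Mor X Y) (h : Mor X X') :
  inflation E' f -> exists P (a : Mor X' P) (b : Mor Y P),
    is_pushout f h a b /\ inflation E' a.
Proof.
move=> [Z [g [Efg F'fg]]]; have [_ [_ _ _ _ [pushoutE _]]] := exactE.
have If : inflation E f by exists Z, g.
have [P [a [b [po [Q [c Eac]]]]]] := pushoutE _ _ _ f h If.
exists P, a, b; split=> //; exists Q, c; split=> //.
apply: (conflation_of_cokernel exactF' (exact_functor_kernel_cokernel Eac).2).
apply: (pushout_inflation exactF' _ (exact_functor_pushout If po)).
by exists (L Z), (Fmap L g).
Qed.

End PreimageClass.

Section Opposite.
Variable C : PreAddCat.

Definition op_cat : PreAddCat :=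
  @Build_PreAddCat C (fun X Y => @Mor C Y X) (@idm C) (fun X Y Z f g => g ;; f)
    (fun X Y Z W f g h => esym (Defs.compA h g f))
    (fun X Y f => compm1 f) (fun X Y f => comp1m f)
    (fun X Y Z f f' g => compDr g f f') (fun X Y Z f g g' => compDl g g' f).

Definition op_class (E : SeqClass C) : SeqClass op_cat :=
  fun X Y Z f g => E Z Y X g f.

Lemma op_zero_objectE (Z : C) : is_zero_object (C := op_cat) Z <-> is_zero_object Z.
Proof. by split=> -[z1 z2]; split; [exact: z2 | exact: z1 | exact: z2 | exact: z1]. Qed.

Lemma is_iso_op (X Y : C) (u : Mor X Y) :
  is_iso (C := op_cat) (X := Y) (Y := X) u -> is_iso u.
Proof. by case=> v [uv vu]; exists v; split; [exact: vu | exact: uv]. Qed.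

Lemma op_additive : is_additive C -> is_additive op_cat.
Proof.
case=> [[Z zZ] biprods]; split; first by exists Z; apply/op_zero_objectE.
move=> X Y; have [S [i1 [i2 [p1 [p2 [e11 e22 e12 e21 e]]]]]] := biprods X Y.
by exists S, p1, p2, i1, i2; split;
  [exact: e11 | exact: e22 | exact: e21 | exact: e12 | exact: e].
Qed.

Lemma iso_closed_inv (E : SeqClass C) : iso_closed E ->
  forall X Y Z (f : Mor X Y) (g : Mor Y Z) X' Y' Z' (f' : Mor X' Y')
    (g' : Mor Y' Z') (u : Mor X' X) (v : Mor Y' Y) (w : Mor Z' Z),
  is_iso u -> is_iso v -> is_iso w ->
  f' ;; v = u ;; f -> g' ;; w = v ;; g -> E X Y Z f g -> E X' Y' Z' f' g'.
Proof.
move=> isoE X Y Z f g X' Y' Z' f' g' u v w [u' [uu' u'u]] [v' [vv' v'v]]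
  [w' [ww' w'w]] ef eg Ef.
apply: (isoE _ _ _ _ _ _ _ _ _ _ u' v' w' _ _ _ _ _ Ef).
- by exists u.
- by exists v.
- by exists w.
- by rewrite -[f']compm1 -vv' -[f' ;; (v ;; v')]Defs.compA ef -!Defs.compA u'u comp1m.
- by rewrite -[g']compm1 -ww' -[g' ;; (w ;; w')]Defs.compA eg -!Defs.compA v'v comp1m.
Qed.

Lemma op_exact_structure (E : SeqClass C) :
  is_exact_structure E -> is_exact_structure (op_class E).
Proof.
case=> kcE isoE [defl_idm infl_idm] [defl_comp infl_comp] [pushoutE pullbackE].
split.
- by move=> X Y Z f g /kcE [kerf cokerg].
- move=> X Y Z f g X' Y' Z' f' g' u v w iso_u iso_v iso_w ef eg.
  by apply: (iso_closed_inv isoE (u := w) (v := v) (w := u)); rewrite ?eg ?ef //;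
    exact: is_iso_op.
- by split=> Z /op_zero_objectE zZ; [apply: infl_idm | apply: defl_idm].
- by split=> X Y Z f g Hf Hg; [apply: infl_comp Hg Hf | apply: defl_comp Hg Hf].
- split.
    move=> X Y X' f h If; have [P [a [b [pb Db]]]] := pullbackE _ _ _ f h If.
    by exists P, b, a.
  move=> Y Z Z' g h Dg; have [P [a [b [po Ia]]]] := pushoutE _ _ _ g h Dg.
  by exists P, b, a.
Qed.

Lemma op_exact_category (E : SeqClass C) :
  is_exact_category E -> is_exact_category (op_class E).
Proof.
by case=> addC exactE; split; [apply: op_additive | apply: op_exact_structure].
Qed.

End Opposite.

Definition op_functor (A B : PreAddCat) (L : AddFunctor A B) :
    AddFunctor (op_cat A) (op_cat B) :=
  @Build_AddFunctor (op_cat A) (op_cat B) L (fun X Y f => Fmap L f)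
    (fun X => Fmap_id L X) (fun X Y Z f g => Fmap_comp L g f)
    (fun X Y f f' => Fmap_add L f f').

Theorem mainTheorem1 (A B : PreAddCat) (E : SeqClass A) (F F' : SeqClass B)
    (L : AddFunctor A B) :
  is_exact_category E ->
  is_exact_category F ->
  is_exact_functor E F L ->
  (forall X Y Z (f : Mor X Y) (g : Mor Y Z), F' X Y Z f g -> F X Y Z f g) ->
  is_exact_category F' ->
  is_exact_category (preimage_class E F' L).
Proof.
move=> exactE [_ exactF] exactL _ [_ exactF'].
have exactLop : is_exact_functor (op_class E) (op_class F) (op_functor L).
  by move=> X Y Z f g /exactL.
have exactEop := op_exact_category exactE.
have exactFop := op_exact_structure exactF.
have exactF'op := op_exact_structure exactF'.
split; first exact: exactE.1.
split.
- by case: exactE => _ [kcE _ _ _ _] X Y Z f g [/kcE].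
- exact: preimage_iso_closed exactE exactF'.
- split; first exact: preimage_deflation_idm exactE exactF exactL exactF'.
  move=> Z /op_zero_objectE.
  exact: (preimage_deflation_idm exactEop exactFop exactLop exactF'op).
- split; first exact: preimage_deflation_comp exactE exactF exactL exactF'.
  move=> X Y Z f g If Ig.
  exact: (preimage_deflation_comp exactEop exactFop exactLop exactF'op Ig If).
- split; first exact: preimage_pushout exactE exactF exactL exactF'.
  move=> Y Z Z' g h Dg.
  have [P [a [b [po Ia]]]] :=
    preimage_pushout exactEop exactFop exactLop exactF'op h Dg.
  by exists P, b, a.
Qed.
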